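(* Let admission prices $c_1>c_2>\dots>c_N$ be given. Let $i_1<i_2$ be customer classes (so $\beta_{i_1}>\beta_{i_2}$) and $j_1<j_2$ queues (so $c_{j_1}>c_{j_2}$). Then there is no Wardrop equilibrium $P^W$ with both $p^W_{i_1j_2}>0$ and $p^W_{i_2j_1}>0$.
   Context: Model: $M$ customer classes, $N$ queues. Class $i$ arrivals are Poisson of rate $\lambda_i>0$, independent across classes; class $i$ has delay sensitivity $\beta_i>0$ with $\beta_1>\dots>\beta_M$. A routing matrix is a right stochastic $M\times N$ matrix $P=[p_{ij}]$; the arrival rate at queue $j$ is $\gamma_j=\sum_i\lambda_ip_{ij}$. Queue $j$ has a cost function $D_j$ (monotone increasing, continuously differentiable with strictly positive derivative in the interior of its domain) and charges a class-independent admission price $c_j$. A class-$i$ customer joining queue $j$ incurs cost $c_j+\beta_iD_j(\gamma_j)$. $P$ is a Wardrop equilibrium if for all $i,j,k$: $p_{ij}>0$ implies $c_j+\beta_iD_j(\gamma_j)\le c_k+\beta_iD_k(\gamma_k)$. *)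

From Stdlib Require Import Reals.
Open Scope R_scope.

(* Indices are 0-based: classes i < M, queues j < N. *)

Fixpoint rsum (n : nat) (f : nat -> R) : R :=
  match n with
  | O => 0
  | S k => rsum k f + f k
  end.

Definition right_stochastic (M N : nat) (P : nat -> nat -> R) : Prop :=
  (forall i j, (i < M)%nat -> (j < N)%nat -> 0 <= P i j) /\
  (forall i, (i < M)%nat -> rsum N (fun j => P i j) = 1).

Definition arrival_rate (M : nat) (lam : nat -> R) (P : nat -> nat -> R) (j : nat) : R :=
  rsum M (fun i => lam i * P i j).

Definition interior (dom : R -> Prop) (x : R) : Prop :=
  exists eps, 0 < eps /\ forall y, Rabs (y - x) < eps -> dom y.

Definition cost_function (dom : R -> Prop) (D : R -> R) : Prop :=
  (forall x y, dom x -> dom y -> x <= y -> D x <= D y) /\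
  exists D' : R -> R,
    forall x, interior dom x ->
      derivable_pt_lim D x (D' x) /\ continuity_pt D' x /\ 0 < D' x.

Definition wardrop (M N : nat) (lam beta c : nat -> R) (D : nat -> R -> R)
    (P : nat -> nat -> R) : Prop :=
  forall i j k, (i < M)%nat -> (j < N)%nat -> (k < N)%nat ->
    0 < P i j ->
    c j + beta i * D j (arrival_rate M lam P j)
      <= c k + beta i * D k (arrival_rate M lam P k).

(* Adding the two equilibrium inequalities gives (b1 - b2) (d1 - d2) >= 0, so the
   queue with the higher price also has the higher delay; then the less sensitive
   class pays more in both price and delay at j1 and would strictly prefer j2. *)
From Stdlib Require Import Reals Lra Psatz.
Open Scope R_scope.

Lemma no_crossed_preferences (b1 b2 c1 c2 d1 d2 : R) :
  0 < b2 -> b2 < b1 -> c2 < c1 ->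
  c2 + b1 * d2 <= c1 + b1 * d1 ->
  c1 + b2 * d1 <= c2 + b2 * d2 ->
  False.
Proof.
  intros Hb2 Hb Hc A B.
  assert (Hd : d2 <= d1) by nra.
  nra.
Qed.

Theorem theorem3
  (M N : nat) (lam beta c : nat -> R)
  (dom : nat -> R -> Prop) (D : nat -> R -> R)
  (Hlam : forall i, (i < M)%nat -> 0 < lam i)
  (Hbeta : forall i, (i < M)%nat -> 0 < beta i)
  (Hbeta_dec : forall i i', (i < i')%nat -> (i' < M)%nat -> beta i' < beta i)
  (HD : forall j, (j < N)%nat -> cost_function (dom j) (D j))
  (Hc_dec : forall j j', (j < j')%nat -> (j' < N)%nat -> c j' < c j)
  (i1 i2 j1 j2 : nat)
  (Hi : (i1 < i2)%nat) (Hi2 : (i2 < M)%nat)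
  (Hj : (j1 < j2)%nat) (Hj2 : (j2 < N)%nat) :
  ~ (exists P : nat -> nat -> R,
       right_stochastic M N P /\ wardrop M N lam beta c D P /\
       0 < P i1 j2 /\ 0 < P i2 j1).
Proof.
  intros [P [_ [HW [H12 H21]]]].
  assert (Hi1 : (i1 < M)%nat) by (apply Nat.lt_trans with i2; assumption).
  assert (Hj1 : (j1 < N)%nat) by (apply Nat.lt_trans with j2; assumption).
  apply (no_crossed_preferences (beta i1) (beta i2) (c j1) (c j2)
           (D j1 (arrival_rate M lam P j1)) (D j2 (arrival_rate M lam P j2))).
  - exact (Hbeta i2 Hi2).
  - exact (Hbeta_dec i1 i2 Hi Hi2).
  - exact (Hc_dec j1 j2 Hj Hj2).
  - exact (HW i1 j2 j1 Hi1 Hj2 Hj1 H12).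
  - exact (HW i2 j1 j2 Hi2 Hj1 Hj2 H21).
Qed.
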